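(* Let $\mathcal{I}=\{p(\mathbf{x})(1-\sum_{i=1}^n x_i):p\in\mathbb{R}[\mathbf{x}]\}$, equip $\mathbb{R}[\mathbf{x}]/\mathcal{I}$ with the norm $\|f\|=\sup_{\mathbf{x}\in\Delta_{n-1}}|f(\mathbf{x})|$, where $\Delta_{n-1}=\{\mathbf{x}\in\mathbb{R}^n_+:x_1+\dots+x_n=1\}$, and let $L:\mathbb{R}[\mathbf{x}]/\mathcal{I}\to\mathbb{R}$ be a linear operator with $L(\mathbf{x}^\alpha)\ge 0$ for all $\alpha\in\mathbb{N}^n$ and $L(1)\le 1$. Then $L$ is continuous with respect to $\|\cdot\|$.
   Context: $\mathbb{R}[\mathbf{x}]=\mathbb{R}[x_1,\dots,x_n]$; $\mathbf{x}^\alpha=x_1^{\alpha_1}\cdots x_n^{\alpha_n}$. *)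

From HB Require Import structures.
From mathcomp Require Import all_boot all_order all_algebra.
From mathcomp Require Import classical_sets reals.
From mathcomp Require Import mpoly.
Set Implicit Arguments. Unset Strict Implicit. Unset Printing Implicit Defensive.
Import Order.TTheory GRing.Theory Num.Theory.
Local Open Scope ring_scope.
Local Open Scope classical_set_scope.

Definition simplex (R : realType) (n : nat) : set ('I_n -> R) :=
  [set x | (forall i, 0 <= x i) /\ \sum_(i < n) x i = 1].

Definition simplex_gen (R : realType) (n : nat) : {mpoly R[n]} :=
  1 - \sum_(i < n) 'X_i.

(* Sup norm on the simplex: ||f|| = sup_{x in Delta} |f(x)|.
   It is well defined on R[x]/I since elements of I vanish on Delta. *)
Definition simplex_norm (R : realType) (n : nat) (f : {mpoly R[n]}) : R :=
  sup [set `|f.@[x]| | x in @simplex R n].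

From HB Require Import structures.
From mathcomp Require Import all_boot all_order all_algebra.
From mathcomp Require Import classical_sets reals.
From mathcomp Require Import mpoly.
From mathcomp Require Import zify ring lra.
Import Order.TTheory GRing.Theory Num.Theory.
Set Implicit Arguments. Unset Strict Implicit.
Local Open Scope ring_scope.

(** For a word s : [N] -> [n] with empirical distribution freq(s) in the
    simplex, put Psi_N(p) = sum_s L(x_s1 ... x_sN) p(freq(s)).  The weights are
    nonnegative and, since L vanishes on the ideal, sum to
    L((x_1 + ... + x_n)^N) = L(1); hence |Psi_N(p)| <= L(1) ||p||.  On a
    monomial x_t of degree d, Psi_N(x_t) is an average over maps
    phi : [d] -> [N]; for injective phi the term collapses to
    L(x_t (x_1 + ... + x_n)^(N-d)) = L(x_t), and the non-injective phi form a
    fraction at most d^2/N.  So Psi_N(p) -> L(p), which gives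
    |L(p)| <= L(1) ||p|| <= ||p||. *)

Lemma ffact_leq_exp (N d : nat) : (N ^_ d <= N ^ d)%N.
Proof.
elim: d => [|d IH] //; rewrite ffactnSr expnSr.
by apply: leq_mul => //; exact: leq_subr.
Qed.

Lemma ffact_exp_gap (N d : nat) : (N * (N ^ d - N ^_ d) <= d * d * N ^ d)%N.
Proof.
suff gap : (N * N ^ d <= N * N ^_ d + d * d * N ^ d)%N.
  by rewrite mulnBr leq_subLR.
elim: d => [|d IH]; first by rewrite ffactn0 expn0 muln1 addn0.
have step : (N * N ^_ d <= N ^_ d.+1 + d * N ^ d)%N.
  by rewrite ffactnSr; have := ffact_leq_exp N d; nia.
rewrite expnS; nia.
Qed.

Section Simplex.
Variables (R : realType) (n : nat).

Definition sumX : {mpoly R[n]} := \sum_(i < n) 'X_i.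

Definition Xprod d (t : 'I_d -> 'I_n) : {mpoly R[n]} := \prod_(j < d) 'X_(t j).

Lemma Xprod_mpolyX d (t : 'I_d -> 'I_n) :
  Xprod t = 'X_[(\sum_(j < d) mnm1 (t j))%MM].
Proof.
by rewrite /Xprod (big_morph (fun m => 'X_[m]) (@mpolyXD _ _) (@mpolyX0 _ _)).
Qed.

Lemma Xprod_cat d1 d2 (t1 : 'I_d1 -> 'I_n) (t2 : 'I_d2 -> 'I_n) :
  Xprod t1 * Xprod t2 =
  Xprod (fun j => match split j with inl a => t1 a | inr b => t2 b end).
Proof.
rewrite /Xprod big_split_ord; congr (_ * _); apply: eq_bigr => j _.
  by rewrite (unsplitK (inl j)).
by rewrite (unsplitK (inr j)).
Qed.

Lemma mpolyX_Xprod (m : 'X_{1..n}) : exists d (t : 'I_d -> 'I_n), 'X_[m] = Xprod t.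
Proof.
pose P q := exists d (t : 'I_d -> 'I_n), q = Xprod t.
have P1 : P 1 by exists 0%N, (ffun0 (card_ord 0)); rewrite /Xprod big_ord0.
have PM q1 q2 : P q1 -> P q2 -> P (q1 * q2).
  by move=> [d1 [t1 ->]] [d2 [t2 ->]]; rewrite Xprod_cat; do 2 eexists.
have PX i : P 'X_i by exists 1%N, (fun _ => i); rewrite /Xprod big_ord1.
rewrite mpolyXE_id; apply: (big_ind P) => // i _.
by elim: (m i) => [|k IH]; rewrite ?expr0 // exprS; apply: PM.
Qed.

Lemma sum_Xprod_match N d (t : 'I_d -> 'I_n) (phi : 'I_d -> 'I_N) : injective phi ->
  \sum_(s : {ffun 'I_N -> 'I_n} | [forall j, s (phi j) == t j]) Xprod s =
  Xprod t * sumX ^+ (N - d).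
Proof.
(* Positions outside the image of phi are free; each contributes a factor sumX. *)
move=> phi_inj.
pose allowed k := [pred i : 'I_n | [forall j, (phi j == k) ==> (i == t j)]].
have -> : \sum_(s : {ffun 'I_N -> 'I_n} | [forall j, s (phi j) == t j]) Xprod s =
          \prod_(k < N) \sum_(i in allowed k) 'X_i.
  rewrite bigA_distr_big_dep /Xprod; apply: eq_bigl => s.
  apply/forallP/familyP => [h k | h j].
    by apply/forallP => j; apply/implyP => /eqP <-; exact: h.
  by have /forallP /(_ j) := h (phi j); rewrite eqxx.
rewrite (bigID (fun k => k \in phi @: [set: 'I_d])) /= big_imset /=; last first.
  by move=> ? ? _ _ /phi_inj.
congr (_ * _).
  apply: eq_big => [j|j _]; first by rewrite inE.
  apply: (big_pred1 (t j)) => i /=.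
  apply/forallP/eqP => [/(_ j) | -> j']; first by rewrite eqxx => /eqP.
  by apply/implyP => /eqP /phi_inj ->.
rewrite (eq_bigr (fun _ => sumX)); last first.
  move=> k phik; apply: eq_bigl => i; apply/forallP => j; apply/implyP => /eqP phij.
  by move: phik; rewrite -phij imset_f.
rewrite prodr_const; congr (_ ^+ _).
apply: (canRL (addKn d)).
by have := cardC (mem (phi @: [set: 'I_d])); rewrite card_imset // cardsT !card_ord.
Qed.

Definition empirical N (s : 'I_N -> 'I_n) : 'I_n -> R :=
  fun i => (\sum_(k < N) ((s k == i)%:R : R)) / N%:R.

Lemma empirical_simplex N (s : 'I_N -> 'I_n) : (0 < N)%N -> simplex (empirical s).
Proof.
move=> N_gt0; split=> [i|].
  by rewrite divr_ge0 ?ler0n // sumr_ge0 // => k _; rewrite ler0n.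
rewrite /empirical -mulr_suml exchange_big /=.
have hit k : \sum_(i < n) ((s k == i)%:R : R) = 1.
  rewrite (bigD1 (s k)) //= eqxx big1 ?addr0 // => i.
  by rewrite eq_sym => /negbTE ->.
by rewrite (eq_bigr _ (fun k _ => hit k)) sumr_const card_ord divff // pnatr_eq0 -lt0n.
Qed.

Lemma simplex_meval_ubound (p : {mpoly R[n]}) :
  has_ubound [set `|p.@[x]| | x in @simplex R n]%classic.
Proof.
exists (\sum_(m <- msupp p) `|p@_m|) => _ [x [x_ge0 x_sum1] <-].
have x_le1 i : x i <= 1 by rewrite -x_sum1 (bigD1 i) //= lerDl sumr_ge0.
rewrite mevalE; apply: le_trans (ler_norm_sum _ _ _) _.
apply: ler_sum => m _; rewrite normrM ler_piMr // normr_prod.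
apply: prodr_ile1 => i _.
by rewrite normr_ge0 /= normrX exprn_ile1 // ger0_norm.
Qed.

Lemma le_simplex_norm (p : {mpoly R[n]}) x : simplex x -> `|p.@[x]| <= simplex_norm p.
Proof. by move=> Sx; apply: (ub_le_sup (simplex_meval_ubound p)); exists x. Qed.

Lemma simplex_norm_ge0 (p : {mpoly R[n]}) : 0 <= simplex_norm p.
Proof.
rewrite /simplex_norm.
set S := [set `|p.@[x]| | x in @simplex R n]%classic.
have [-> | /set0P [_ [x Sx _]]] := eqVneq S set0; first by rewrite sup0.
exact: le_trans (normr_ge0 _) (le_simplex_norm p Sx).
Qed.

End Simplex.

Arguments sumX {R n}.
Arguments Xprod {R n d} t.
Arguments empirical {R n N} s i.

Section PositiveFunctional.
Variables (R : realType) (n : nat) (L : {mpoly R[n]} -> R).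
Hypothesis L_lin : forall (a : R) (p q : {mpoly R[n]}), L (a *: p + q) = a * L p + L q.

Lemma L0 : L 0 = 0.
Proof.
have := L_lin 1 0 0; rewrite scaler0 addr0 mul1r => L00.
by apply/eqP; rewrite -(subrr (L 0)) {2}L00 addrK.
Qed.

Lemma LD p q : L (p + q) = L p + L q.
Proof. by have := L_lin 1 p q; rewrite scale1r mul1r. Qed.

Lemma LZ a p : L (a *: p) = a * L p.
Proof. by have := L_lin a p 0; rewrite !addr0 L0 addr0. Qed.

Lemma LB p q : L (p - q) = L p - L q.
Proof. by rewrite -scaleN1r LD LZ mulN1r. Qed.

Lemma L_sum (I : Type) (r : seq I) (P : pred I) (F : I -> {mpoly R[n]}) :
  L (\sum_(i <- r | P i) F i) = \sum_(i <- r | P i) L (F i).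
Proof. exact: (big_morph L LD L0). Qed.

Hypothesis L_I : forall p : {mpoly R[n]}, L (p * @simplex_gen R n) = 0.

Lemma L_mulsumX q : L (q * sumX) = L q.
Proof.
have := L_I q; rewrite /simplex_gen mulrBr mulr1 LB => /eqP.
by rewrite subr_eq0 => /eqP <-.
Qed.

Lemma L_mulsumXn q k : L (q * sumX ^+ k) = L q.
Proof. by elim: k => [|k IH]; rewrite ?expr0 ?mulr1 // exprSr mulrA L_mulsumX. Qed.

Hypothesis L_mon : forall m : 'X_{1..n}, 0 <= L 'X_[m].

Lemma L1_ge0 : 0 <= L 1.
Proof. by rewrite -(@mpolyX0 n R). Qed.

Lemma L_Xprod_ge0 d (t : 'I_d -> 'I_n) : 0 <= L (Xprod t).
Proof. by rewrite Xprod_mpolyX. Qed.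

Definition Lempirical N (p : {mpoly R[n]}) : R :=
  \sum_(s : {ffun 'I_N -> 'I_n}) L (Xprod s) * p.@[empirical s].

Lemma sum_L_Xprod N : \sum_(s : {ffun 'I_N -> 'I_n}) L (Xprod s) = L 1.
Proof.
rewrite -[in RHS](L_mulsumXn 1 N) mul1r -L_sum; congr L.
by rewrite -[N in sumX ^+ N]card_ord -prodr_const /sumX bigA_distr_bigA.
Qed.

Lemma Lempirical0 N : Lempirical N 0 = 0.
Proof. by rewrite /Lempirical big1 // => s _; rewrite meval0 mulr0. Qed.

Lemma LempiricalDZ N c (q p : {mpoly R[n]}) :
  Lempirical N (c *: q + p) = c * Lempirical N q + Lempirical N p.
Proof.
rewrite /Lempirical mulr_sumr -big_split; apply: eq_bigr => s _ /=.
by rewrite mevalD mevalZ; ring.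
Qed.

Lemma norm_Lempirical_le N p : (0 < N)%N -> `|Lempirical N p| <= L 1 * simplex_norm p.
Proof.
move=> N_gt0; rewrite /Lempirical -(sum_L_Xprod N) mulr_suml.
apply: le_trans (ler_norm_sum _ _ _) _; apply: ler_sum => s _.
rewrite normrM ger0_norm ?L_Xprod_ge0 // ler_wpM2l ?L_Xprod_ge0 //.
exact/le_simplex_norm/empirical_simplex.
Qed.

Definition Lmatch N d (t : 'I_d -> 'I_n) (phi : 'I_d -> 'I_N) : R :=
  \sum_(s : {ffun 'I_N -> 'I_n})
    L (Xprod s) * \prod_(j < d) ((s (phi j) == t j)%:R : R).

Lemma Lmatch_bounds N d (t : 'I_d -> 'I_n) (phi : 'I_d -> 'I_N) :
  0 <= Lmatch t phi <= L 1.
Proof.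
have indicator01 (s : {ffun 'I_N -> 'I_n}) :
    0 <= \prod_(j < d) ((s (phi j) == t j)%:R : R) <= 1.
  rewrite prodr_ge0 => [|j _]; last by rewrite ler0n.
  by rewrite prodr_ile1 // => j _; rewrite ler0n lern1 leq_b1.
rewrite -(sum_L_Xprod N) sumr_ge0 => [|s _] /=; last first.
  by rewrite mulr_ge0 ?L_Xprod_ge0 //; case/andP: (indicator01 s).
apply: ler_sum => s _.
by rewrite ler_piMr ?L_Xprod_ge0 //; case/andP: (indicator01 s).
Qed.

Lemma Lmatch_inj N d (t : 'I_d -> 'I_n) (phi : 'I_d -> 'I_N) :
  injective phi -> Lmatch t phi = L (Xprod t).
Proof.
move=> phi_inj; rewrite -(L_mulsumXn _ (N - d)) -(sum_Xprod_match _ t phi_inj).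
rewrite L_sum [RHS]big_mkcond /=; apply: eq_bigr => s _.
case: (boolP [forall j, s (phi j) == t j]) => [/forallP st | /forallPn [j sjt]].
  by rewrite big1 ?mulr1 // => j _; rewrite st.
by rewrite (bigD1 j) //= (negbTE sjt) mul0r mulr0.
Qed.

Lemma Lempirical_Xprod N d (t : 'I_d -> 'I_n) :
  Lempirical N (Xprod t) = (\sum_(phi : {ffun 'I_d -> 'I_N}) Lmatch t phi) / (N ^ d)%:R.
Proof.
rewrite /Lempirical /Lmatch exchange_big mulr_suml /=; apply: eq_bigr => s _.
rewrite -mulr_sumr -mulrA; congr (_ * _).
rewrite /Xprod rmorph_prod /=; under eq_bigr do rewrite mevalXU.
rewrite /empirical big_split /= prodr_const card_ord bigA_distr_bigA.
by rewrite natrX exprVn.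
Qed.

Lemma Lempirical_Xprod_err N d (t : 'I_d -> 'I_n) : (0 < N)%N -> (d <= N)%N ->
  `|L (Xprod t) - Lempirical N (Xprod t)| <= L 1 * (d * d)%:R / N%:R.
Proof.
move=> N_gt0 le_dN.
have Nd_gt0 : 0 < (N ^ d)%:R :> R by rewrite ltr0n expn_gt0 N_gt0.
have /andP [Lt_ge0 Lt_leL1] : 0 <= L (Xprod t) <= L 1.
  have widen_inj : injective (widen_ord le_dN).
    by move=> j k /(congr1 val) /= /val_inj.
  by rewrite -(Lmatch_inj t widen_inj) Lmatch_bounds.
set inj := [set phi : {ffun 'I_d -> 'I_N} | injectiveb phi].
have card_noninj : #|~: inj| = (N ^ d - N ^_ d)%N.
  apply: (canRL (addKn _)).
  by have := cardsC inj; rewrite card_inj_ffuns card_ffun !card_ord.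
have -> : L (Xprod t) = (\sum_(phi : {ffun 'I_d -> 'I_N}) L (Xprod t)) / (N ^ d)%:R.
  by rewrite sumr_const card_ffun !card_ord -[L _ *+ _]mulr_natr mulfK // lt0r_neq0.
rewrite Lempirical_Xprod -mulrBl -sumrB (bigID (fun phi => phi \in inj)) /=.
rewrite big1 ?add0r => [|phi]; last first.
  by rewrite inE => /injectiveP /(Lmatch_inj t) ->; rewrite subrr.
have noninj_err : `|\sum_(phi | phi \notin inj) (L (Xprod t) - Lmatch t phi)|
                  <= L 1 * (N ^ d - N ^_ d)%:R.
  rewrite -card_noninj -sumr_const mulr_sumr.
  rewrite [X in _ <= X](eq_bigl (fun phi => phi \notin inj)) => [|phi]; last first.
    by rewrite inE.
  apply: le_trans (ler_norm_sum _ _ _) _; apply: ler_sum => phi _.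
  have /andP [? ?] := Lmatch_bounds t phi.
  rewrite mulr1 ler_norml; apply/andP; split; lra.
rewrite normrM normfV normr_nat ler_pdivrMr // (le_trans noninj_err) //.
rewrite -!mulrA ler_wpM2l ?L1_ge0 // mulrCA mulrC ler_pdivlMr ?ltr0n //.
by rewrite -!natrM ler_nat mulnC ffact_exp_gap.
Qed.

Lemma Lempirical_err p :
  exists2 C, 0 <= C & exists D, forall N, (0 < N)%N -> (D <= N)%N ->
    `|L p - Lempirical N p| <= C / N%:R.
Proof.
elim/mpolyind: p => [|c m p _ _ [C C_ge0 [D errp]]].
  by exists 0 => //; exists 0%N => N _ _; rewrite L0 Lempirical0 subrr normr0 mul0r.
have [d [t ->]] := mpolyX_Xprod R m.
exists (`|c| * (L 1 * (d * d)%:R) + C); first by rewrite addr_ge0 // !mulr_ge0 ?L1_ge0.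
exists (maxn d D) => N N_gt0; rewrite geq_max => /andP [le_dN le_DN].
rewrite LempiricalDZ LD LZ.
have -> : c * L (Xprod t) + L p - (c * Lempirical N (Xprod t) + Lempirical N p)
    = c * (L (Xprod t) - Lempirical N (Xprod t)) + (L p - Lempirical N p) by ring.
apply: le_trans (ler_normD _ _) _.
rewrite mulrDl normrM -mulrA; apply: lerD; last exact: errp.
by rewrite ler_wpM2l // Lempirical_Xprod_err.
Qed.

Lemma norm_L_le p : `|L p| <= L 1 * simplex_norm p.
Proof.
have [C C_ge0 [D errp]] := Lempirical_err p.
apply/ler_addgt0Pr => e e_gt0.
pose N := maxn (maxn D 1) (Num.bound (C / e)).
have N_gt0 : (0 < N)%N by rewrite !leq_max orbT.
have le_DN : (D <= N)%N by rewrite !leq_max leqnn.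
have C_N_le : C / N%:R <= e.
  rewrite ler_pdivrMr ?ltr0n // mulrC -ler_pdivrMr //.
  apply/ltW/(lt_le_trans (archi_boundP _)); first by rewrite divr_ge0 // ltW.
  by rewrite ler_nat !leq_max leqnn orbT.
have := errp N N_gt0 le_DN.
have := norm_Lempirical_le p N_gt0.
have := ler_normD (Lempirical N p) (L p - Lempirical N p); rewrite addrC subrK.
lra.
Qed.

End PositiveFunctional.

Theorem lemma4 (R : realType) (n : nat) (L : {mpoly R[n]} -> R)
  (L_lin : forall (a : R) (p q : {mpoly R[n]}), L (a *: p + q) = a * L p + L q)
  (L_I : forall p : {mpoly R[n]}, L (p * @simplex_gen R n) = 0)
  (L_mon : forall m : 'X_{1..n}, 0 <= L 'X_[m])
  (L_one : L 1 <= 1) :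
  forall (f : {mpoly R[n]}) (eps : R), 0 < eps ->
    exists2 delta : R, 0 < delta &
      forall g : {mpoly R[n]}, simplex_norm (g - f) < delta -> `|L g - L f| < eps.
Proof.
move=> f eps eps_gt0; exists eps => // g near_f.
rewrite -(LB L_lin); apply: le_lt_trans near_f.
apply: le_trans (norm_L_le L_lin L_I L_mon (g - f)) _.
by rewrite ler_piMl // simplex_norm_ge0.
Qed.
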